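(* Let $m,n,p,q,s,t$ be arbitrary integers, let $A(x_1,x_2)=\begin{bmatrix}sx_1 & x_2\\ mx_1+nx_2 & -sx_1\end{bmatrix}$, and let $$P(x_1,x_2,x_3,x_4)=\begin{bmatrix}tA(x_1,x_2) & A(x_3,x_4)\\ pA(x_1,x_2)+qA(x_3,x_4) & -tA(x_1,x_2)\end{bmatrix}.$$ Then there exist trilinear forms $w_1,\dots,w_4$ in independent variables $x_1,\dots,x_4,y_1,\dots,y_4,z_1,\dots,z_4$, with coefficients integer polynomials in $m,n,p,q,s,t$, such that $P(x)P(y)P(z)=P(w)$. Consequently the quaternary quartic form $f=\det P$ satisfies $f(x_1,\dots,x_4)f(y_1,\dots,y_4)f(z_1,\dots,z_4)=f(w_1,\dots,w_4)$ identically. *)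

From mathcomp Require Import all_boot all_order all_algebra.
From mathcomp Require Export mpoly.
Set Implicit Arguments. Unset Strict Implicit. Unset Printing Implicit Defensive.
Import Order.TTheory GRing.Theory Num.Theory.
Local Open Scope ring_scope.

Definition Amat (m n s : int) (x1 x2 : int) : 'M[int]_2 :=
  \matrix_(i < 2, j < 2)
    if i == 0 then (if j == 0 then s * x1 else x2)
    else (if j == 0 then m * x1 + n * x2 else - (s * x1)).

(* P(x1,x2,x3,x4) = [[t A(x1,x2), A(x3,x4)], [p A(x1,x2) + q A(x3,x4), - t A(x1,x2)]];
   the vector x : 'I_4 -> int stands for (x_1,x_2,x_3,x_4) = (x 0, x 1, x 2, x 3). *)
Definition Pmat (m n p q s t : int) (x : 'I_4 -> int) : 'M[int]_4 :=
  let A12 := Amat m n s (x (inord 0)) (x (inord 1)) in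
  let A34 := Amat m n s (x (inord 2)) (x (inord 3)) in
  block_mx (t *: A12) A34 (p *: A12 + q *: A34) (- (t *: A12)) : 'M[int]_(2 + 2).

Definition params (m n p q s t : int) : 'I_6 -> int :=
  fun i => nth 0 [:: m; n; p; q; s; t] i.

From mathcomp Require Import all_boot all_algebra.
From mathcomp Require Import mpoly ring.

(* The identity P(x)P(y)P(z) = P(w) is a statement about two commuting
   "Clifford pairs".  Call e0, e1 in an algebra over K a Clifford pair with
   constants (a, b, c) if e0^2 = a, e1^2 = b and e0 e1 + e1 e0 = c.  In such a
   pair every triple product e_i e_j e_k is again a K-combination of e0, e1
   (clifford_triple).  If f and g are Clifford pairs whose members commute
   with each other, the four products f_h g_o span a subspace closed under
   triple products, so the "tensor form" u(x) = sum_l x_l f_(h l) g_(o l)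
   satisfies u(x) u(y) u(z) = u(w) with w trilinear in x, y, z
   (tensor_form_mul).
   For the theorem, A(x1,x2) = x1 E0 + x2 E1 where (E0, E1) = Abasis m n s is
   a Clifford pair of 2x2 matrices with constants (s^2, n, m).  The same shape
   with parameters (p, q, t) governs the outer block structure, so P(x) is the
   tensor form of the commuting 4x4 pairs Abasis p q t (x) 1 and
   1 (x) Abasis m n s, realized by two block embeddings of 2x2 matrices into
   4x4 matrices (lift_l, lift_r).  The
   coefficients of w are products of the structure constants, hence integer
   polynomials in m, n, p, q, s, t, and the determinant identity follows by
   multiplicativity of the determinant. *)

Set Implicit Arguments.
Unset Strict Implicit.
Unset Printing Implicit Defensive.
Import GRing.Theory.
Local Open Scope ring_scope.

Section CliffordPair.
Variables (K : comNzRingType) (R : algType K).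

(* e false, e true generate a (generalized) quaternion algebra: the
   relations of the Clifford algebra of the binary form a X^2 + c XY + b Y^2. *)
Definition clifford_pair (a b c : K) (e : bool -> R) : Prop :=
  [/\ e false ^+ 2 = a%:A, e true ^+ 2 = b%:A
    & e false * e true + e true * e false = c%:A].

(* Coordinates of e_i e_j e_k on the basis (e false, e true). *)
Definition triple_coord (a b c : K) (i j k : bool) : K * K :=
  match i, j, k with
  | false, false, false => (a, 0)
  | false, false, true  => (0, a)
  | true,  false, false => (0, a)
  | false, true,  true  => (b, 0)
  | true,  true,  false => (b, 0)
  | true,  true,  true  => (0, b)
  | false, true,  false => (c, - a)
  | true,  false, true  => (- b, c)
  end.

Definition triple_coef (a b c : K) (i j k l : bool) : K :=
  if l then (triple_coord a b c i j k).2 else (triple_coord a b c i j k).1.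

Lemma clifford_triple a b c e : clifford_pair a b c e ->
  forall i j k, e i * e j * e k = \sum_l triple_coef a b c i j k l *: e l.
Proof.
case=> e0 e1 e01 i j k; rewrite big_bool /triple_coef.
have sq b' : e b' * e b' = (if b' then b else a)%:A by case: b'; rewrite -expr2.
have e10 : e true * e false = c%:A - e false * e true.
  by rewrite -e01 addrAC subrr add0r.
have e01' : e false * e true = c%:A - e true * e false by rewrite -e01 addrK.
case: i; case: j; case: k => /=; rewrite ?sq -?mulrA ?sq ?mulr_algl ?mulr_algr
  ?scale0r ?add0r ?addr0 //.
- by rewrite mulrA e10 mulrBl mulr_algl -mulrA sq mulr_algr scaleNr addrC.
- by rewrite mulrA e01' mulrBl mulr_algl -mulrA sq mulr_algr scaleNr addrC.
Qed.

Section TensorProduct.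
Variables (a b c a' b' c' : K) (f g : bool -> R).
Hypotheses (f_pair : clifford_pair a b c f) (g_pair : clifford_pair a' b' c' g).
Hypothesis fg_comm : forall i j, f i * g j = g j * f i.
Variables (I : finType) (code : I -> bool * bool).
Hypothesis code_bij : bijective code.

Definition tensor_basis (l : I) : R := f (code l).1 * g (code l).2.

Definition tensor_coef (i j k l : I) : K :=
  triple_coef a b c (code i).1 (code j).1 (code k).1 (code l).1
  * triple_coef a' b' c' (code i).2 (code j).2 (code k).2 (code l).2.

Definition tensor_form (x : I -> K) : R := \sum_l x l *: tensor_basis l.

(* Since f and g commute, f_i g_i f_j g_j f_k g_k = (f_i f_j f_k)(g_i g_j g_k),
   and both factors expand by clifford_triple. *)
Lemma tensor_triple i j k :
  tensor_basis i * tensor_basis j * tensor_basis k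
  = \sum_l tensor_coef i j k l *: tensor_basis l.
Proof.
rewrite /tensor_basis.
have regroup h1 h2 h3 o1 o2 o3 : f h1 * g o1 * (f h2 * g o2) * (f h3 * g o3)
    = f h1 * f h2 * f h3 * (g o1 * g o2 * g o3).
  rewrite -!mulrA; congr (_ * _).
  rewrite mulrA -fg_comm -mulrA; congr (_ * _).
  by rewrite (mulrA (g o2)) -fg_comm -mulrA mulrA -fg_comm -mulrA.
rewrite regroup (clifford_triple f_pair) (clifford_triple g_pair) big_distrl /=.
under eq_bigr do rewrite big_distrr /=.
rewrite pair_bigA (reindex code (onW_bij _ code_bij)) /=.
apply: eq_bigr => l _.
by rewrite -scalerAl -scalerAr scalerA.
Qed.

Lemma tensor_form_mul (x y z : I -> K) :
  tensor_form x * tensor_form y * tensor_form z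
  = tensor_form (fun l => \sum_i \sum_j \sum_k
                   tensor_coef i j k l * x i * y j * z k).
Proof.
have scaleM (u v : K) (r r' : R) : u *: r * (v *: r') = (u * v) *: (r * r').
  by rewrite -scalerAl -scalerAr scalerA.
have expand : tensor_form x * tensor_form y * tensor_form z
    = \sum_i \sum_j \sum_k \sum_l
        (tensor_coef i j k l * x i * y j * z k) *: tensor_basis l.
  rewrite /tensor_form big_distrl big_distrl /=; apply: eq_bigr => i _.
  rewrite (big_distrr (x i *: _)) big_distrl /=; apply: eq_bigr => j _.
  rewrite big_distrr /=; apply: eq_bigr => k _.
  rewrite !scaleM tensor_triple scaler_sumr; apply: eq_bigr => l _.
  by rewrite scalerA mulrC !mulrA.
rewrite expand /tensor_form.
under eq_bigr => i _ do under eq_bigr => j _ do rewrite exchange_big.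
under eq_bigr => i _ do rewrite exchange_big.
rewrite exchange_big; apply: eq_bigr => l _.
rewrite scaler_suml; apply: eq_bigr => i _.
by rewrite scaler_suml; apply: eq_bigr => j _; rewrite scaler_suml.
Qed.
End TensorProduct.
End CliffordPair.

Lemma clifford_pair_map (K : comNzRingType) (R R' : algType K) (phi : R -> R')
    a b c e :
    {morph phi : u v / u * v} -> {morph phi : u v / u + v} ->
    (forall k, phi k%:A = k%:A) ->
  clifford_pair a b c e -> clifford_pair a b c (phi \o e).
Proof.
move=> phiM phiD phiA [e0 e1 e01].
by split; rewrite /= ?expr2 -?phiM -?phiD -?expr2 ?e0 ?e1 ?e01 phiA.
Qed.

Definition Abasis (m n s : int) (b : bool) : 'M[int]_2 :=
  if b then Amat m n s 0 1 else Amat m n s 1 0.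

Lemma Abasis_pair m n s : clifford_pair (s * s) n m (Abasis m n s).
Proof.
split; apply/matrixP => i j.
all: rewrite ?expr2 -?mulmxE !mxE !big_ord_recl !big_ord0 !mxE.
all: case: i => -[|[|//]] ?; case: j => -[|[|//]] ? /=.
all: ring.
Qed.

Section Lifts.
Variable K : comNzRingType.

(* The embeddings M |-> 1 (x) M and M |-> M (x) 1 of 2x2 matrices into 4x4
   block matrices; both are algebra morphisms and their images commute. *)
Definition lift_r (M : 'M[K]_2) : 'M[K]_(2 + 2) := block_mx M 0 0 M.

Definition lift_l (M : 'M[K]_2) : 'M[K]_(2 + 2) :=
  block_mx (M 0 0)%:M (M 0 1)%:M (M 1 0)%:M (M 1 1)%:M.

Lemma lift_rM : {morph lift_r : M N / M * N}.
Proof.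
move=> M N; rewrite /lift_r -!mulmxE mulmx_block.
by rewrite !mulmx0 !mul0mx !addr0 !add0r.
Qed.

Lemma lift_rD : {morph lift_r : M N / M + N}.
Proof. by move=> M N; rewrite /lift_r add_block_mx addr0. Qed.

Lemma lift_r_alg (k : K) : lift_r k%:A = k%:A.
Proof. by rewrite /lift_r !scalemx1 -scalar_mx_block. Qed.

Lemma lift_lM : {morph lift_l : M N / M * N}.
Proof.
move=> M N; rewrite /lift_l -!mulmxE mulmx_block -!scalar_mxM -!raddfD /=.
have ord2_0 : ord0 = 0 :> 'I_2 by apply/val_inj.
have ord2_1 : lift ord0 ord0 = 1 :> 'I_2 by apply/val_inj.
by rewrite !mxE !big_ord_recl !big_ord0 !addr0 ord2_0 ord2_1.
Qed.

Lemma lift_lD : {morph lift_l : M N / M + N}.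
Proof. by move=> M N; rewrite /lift_l add_block_mx !mxE !raddfD. Qed.

Lemma lift_l_alg (k : K) : lift_l k%:A = k%:A.
Proof.
by rewrite /lift_l !scalemx1 !mxE /= !mulr1n !mulr0n raddf0 -scalar_mx_block.
Qed.

Lemma lift_lr (F G : 'M[K]_2) :
  lift_l F * lift_r G = block_mx (F 0 0 *: G) (F 0 1 *: G) (F 1 0 *: G) (F 1 1 *: G).
Proof.
rewrite /lift_l /lift_r -mulmxE mulmx_block.
by rewrite ?mulmx0 ?mul0mx ?addr0 ?add0r !mul_scalar_mx.
Qed.

Lemma lift_lrC (F G : 'M[K]_2) : lift_l F * lift_r G = lift_r G * lift_l F.
Proof.
rewrite lift_lr /lift_l /lift_r -mulmxE mulmx_block.
by rewrite ?mulmx0 ?mul0mx ?addr0 ?add0r !mul_mx_scalar.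
Qed.
End Lifts.
Arguments lift_l {K}.
Arguments lift_r {K}.

Lemma big_ord4 (V : nmodType) (F : 'I_4 -> V) :
  \sum_(i < 4) F i = F (inord 0) + F (inord 1) + F (inord 2) + F (inord 3).
Proof.
rewrite !big_ord_recl big_ord0 addr0 !addrA.
by congr (_ + _ + _ + _); congr F; apply/val_inj; rewrite /= inordK.
Qed.

Definition code4 (l : 'I_4) : bool * bool := (1 < l, odd l)%N.

Lemma code4_bij : bijective code4.
Proof.
exists (fun hb : bool * bool => inord (hb.1.*2 + hb.2)).
  by move=> -[[|[|[|[|//]]]] ?]; apply/val_inj; rewrite /= inordK.
by case=> -[] []; rewrite /code4 inordK.
Qed.

Definition Fgen (p q t : int) (b : bool) : 'M[int]_(2 + 2) := lift_l (Abasis p q t b).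
Definition Ggen (m n s : int) (b : bool) : 'M[int]_(2 + 2) := lift_r (Abasis m n s b).

Lemma Fgen_pair p q t : clifford_pair (t * t) q p (Fgen p q t).
Proof.
apply: (clifford_pair_map (phi := lift_l)) (Abasis_pair p q t).
- exact: lift_lM.
- exact: lift_lD.
- exact: lift_l_alg.
Qed.

Lemma Ggen_pair m n s : clifford_pair (s * s) n m (Ggen m n s).
Proof.
apply: (clifford_pair_map (phi := lift_r)) (Abasis_pair m n s).
- exact: lift_rM.
- exact: lift_rD.
- exact: lift_r_alg.
Qed.

Lemma FGgen_comm m n p q s t h o :
  Fgen p q t h * Ggen m n s o = Ggen m n s o * Fgen p q t h.
Proof. exact: lift_lrC. Qed.

Lemma Pmat_tensor m n p q s t x :
  Pmat m n p q s t x = tensor_form (Fgen p q t) (Ggen m n s) code4 x.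
Proof.
rewrite /tensor_form /tensor_basis /Fgen /Ggen big_ord4 /code4 /=.
rewrite !inordK //= !lift_lr.
rewrite !(scale_block_mx (m1:=2) (m2:=2) (n1:=2) (n2:=2)).
rewrite !(add_block_mx (m1:=2) (m2:=2) (n1:=2) (n2:=2)) /Pmat /=.
f_equal; apply/matrixP => i j; rewrite !mxE.
all: case: i => -[|[|//]] ?; case: j => -[|[|//]] ? /=.
all: ring.
Qed.

Lemma rmorph_triple_coef (K K' : comNzRingType) (phi : {rmorphism K -> K'})
    a b c i j k l :
  phi (triple_coef a b c i j k l) = triple_coef (phi a) (phi b) (phi c) i j k l.
Proof. by case: i; case: j; case: k; case: l; rewrite /= ?rmorph0 ?rmorphN. Qed.

Definition coef_poly (i j k l : 'I_4) : {mpoly int[6]} :=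
  tensor_coef ('X_(inord 5) * 'X_(inord 5)) 'X_(inord 3) 'X_(inord 2)
              ('X_(inord 4) * 'X_(inord 4)) 'X_(inord 1) 'X_(inord 0) code4 i j k l.

Lemma coef_poly_eval m n p q s t i j k l :
  (coef_poly i j k l).@[params m n p q s t]
  = tensor_coef (t * t) q p (s * s) n m code4 i j k l.
Proof.
rewrite /coef_poly /tensor_coef rmorphM !rmorph_triple_coef.
by rewrite !rmorphM /= !mevalXU /params !inordK.
Qed.

Theorem mainTheorem12 :
  exists c : 'I_4 -> 'I_4 -> 'I_4 -> 'I_4 -> {mpoly int[6]},
  forall (m n p q s t : int) (x y z : 'I_4 -> int),
    let w := fun l : 'I_4 =>
      \sum_(i < 4) \sum_(j < 4) \sum_(k < 4)
         (c i j k l).@[params m n p q s t] * x i * y j * z k in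
    Pmat m n p q s t x *m Pmat m n p q s t y *m Pmat m n p q s t z
      = Pmat m n p q s t w
    /\ \det (Pmat m n p q s t x) * \det (Pmat m n p q s t y)
         * \det (Pmat m n p q s t z) = \det (Pmat m n p q s t w).
Proof.
exists coef_poly => m n p q s t x y z w.
have prodE : Pmat m n p q s t x *m Pmat m n p q s t y *m Pmat m n p q s t z
             = Pmat m n p q s t w.
  rewrite !mulmxE !Pmat_tensor.
  rewrite (tensor_form_mul (Fgen_pair p q t) (Ggen_pair m n s)
             (@FGgen_comm m n p q s t) code4_bij).
  apply: eq_bigr => l _; congr (_ *: _).
  by do 3 (apply: eq_bigr => ? _); rewrite coef_poly_eval.
by split=> //; rewrite -!det_mulmx prodE.
Qed.
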